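(* Let $m=2$ and let $n\ge 1$ be arbitrary. For every distribution $\mathcal{D}$ supported on $[0,1]$, the majority rule (which selects an alternative ranked first by at least as many voters as the other alternative, ties broken arbitrarily) is both an expected-distortion-maximizing rule and an expected-welfare-maximizing rule for $\mathcal{D}$.
   Context: There are $n$ voters $N=\{1,\dots,n\}$ and $m$ alternatives $A=\{1,\dots,m\}$. A preference profile $\sigma=(\sigma_1,\dots,\sigma_n)$ consists of a ranking (linear order) $\sigma_i$ of $A$ for each voter; position $1$ is the top. A (deterministic) voting rule $f$ maps each preference profile to an alternative $f(\sigma)\in A$. Given a distribution $\mathcal{D}$ and a profile $\sigma$, a random utility profile $u$ consistent with $\sigma$ is generated as follows: independently for each voter $i$, draw $m$ i.i.d. samples from $\mathcal{D}$ and assign them, from highest to lowest, to the alternatives in the order of $\sigma_i$ (the alternative in position $r$ gets the $r$-th largest sample). The social welfare of alternative $j$ is $\mathrm{sw}(j,u)=\sum_{i\in N}u_{ij}$; all expectations are over this random $u$. The distortion of alternative $j$ at $\sigma$ is the random variable $\mathrm{dist}(j,\sigma)=\mathrm{sw}(j,u)/\max_{k\in A}\mathrm{sw}(k,u)$. A rule is an expected-distortion-maximizing rule for $\mathcal{D}$ if for every profile $\sigma$ it selects an alternative maximizing $\mathbb{E}[\mathrm{dist}(j,\sigma)]$ over $j\in A$; it is an expected-welfare-maximizing rule for $\mathcal{D}$ if for every $\sigma$ it selects an alternative maximizing $\mathbb{E}[\mathrm{sw}(j,u)]$ over $j\in A$. *)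

From HB Require Import structures.
From mathcomp Require Import all_boot all_order all_algebra all_fingroup.
From mathcomp Require Import all_classical all_reals all_analysis.
Set Implicit Arguments. Unset Strict Implicit. Unset Printing Implicit Defensive.
Import Order.TTheory GRing.Theory Num.Theory.
Local Open Scope ring_scope.

Section Voting.
Variables (R : realType) (n m : nat).

(* A preference profile: sigma i is voter i's ranking of the alternatives 'I_m,
   read as "sigma i r = the alternative in position r" (r = 0 is the top). *)
Definition profile := 'I_n -> {perm 'I_m}.

Definition voting_rule := profile -> 'I_m.

(* Raw samples: s (i * m + r) is the r-th of the m i.i.d. samples of voter i. *)
Definition voter_samples (s : nat -> R) (i : 'I_n) : seq R :=
  [seq s (i * m + r)%N | r <- iota 0 m].

(* Utility of voter i for alternative j: the alternative in position r gets
   the r-th largest of the voter's samples (r = 0: the largest). *)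
Definition utility (sigma : profile) (s : nat -> R) (i : 'I_n) (j : 'I_m) : R :=
  nth 0 (sort (fun x y : R => y <= x) (voter_samples s i)) (val ((sigma i)^-1%g j)).

Definition sw (sigma : profile) (s : nat -> R) (j : 'I_m) : R :=
  \sum_(i < n) utility sigma s i j.

(* max_k sw(k,u) (seeded with sw(j,u), which belongs to the family anyway). *)
Definition max_sw (sigma : profile) (s : nat -> R) (j : 'I_m) : R :=
  \big[Num.max/sw sigma s j]_(k < m) sw sigma s k.

Definition dist (sigma : profile) (s : nat -> R) (j : 'I_m) : R :=
  sw sigma s j / max_sw sigma s j.

(* Iterated integral of f against D^{\otimes k} on the first k coordinates
   (expectation w.r.t. k i.i.d. draws from D). *)
Fixpoint iter_int (D : probability R R) (k : nat) (f : (nat -> R) -> \bar R)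
  : \bar R :=
  if k is k'.+1 then
    (\int[D]_x iter_int D k' (fun v => f (fun i => if i is i'.+1 then v i' else x)))%E
  else f (fun _ => 0).

Definition exp_dist (D : probability R R) (sigma : profile) (j : 'I_m) : \bar R :=
  iter_int D (n * m) (fun s => (dist sigma s j)%:E).

Definition exp_sw (D : probability R R) (sigma : profile) (j : 'I_m) : \bar R :=
  iter_int D (n * m) (fun s => (sw sigma s j)%:E).

Definition exp_dist_maximizing (D : probability R R) (f : voting_rule) : Prop :=
  forall sigma (j : 'I_m), (exp_dist D sigma j <= exp_dist D sigma (f sigma))%E.

Definition exp_welfare_maximizing (D : probability R R) (f : voting_rule) : Prop :=
  forall sigma (j : 'I_m), (exp_sw D sigma j <= exp_sw D sigma (f sigma))%E.

End Voting.

Definition plurality_score (n k : nat) (sigma : profile n k.+1) (j : 'I_k.+1) : nat :=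
  #|[set i : 'I_n | sigma i ord0 == j]|.

Definition majority_rule (n : nat) (f : voting_rule n 2) : Prop :=
  forall (sigma : profile n 2) (j : 'I_2),
    (plurality_score sigma j <= plurality_score sigma (f sigma))%N.

From HB Require Import structures.
From mathcomp Require Import all_boot all_order all_algebra all_fingroup.
From mathcomp Require Import all_classical all_reals all_analysis.
From mathcomp Require Import measurable_realfun zify.
Import Order.TTheory GRing.Theory Num.Theory.
Local Open Scope ring_scope.
Local Open Scope classical_set_scope.
Set Implicit Arguments. Unset Strict Implicit. Unset Printing Implicit Defensive.

(* With two alternatives, a voter gives the larger of its two samples to the
   alternative it ranks first and the smaller one to the other.  Hence the
   welfare and the distortion of an alternative are statistics of the set S of
   voters ranking it first, and on nonnegative samples both grow with S.  The
   2n samples being i.i.d., relabelling the voters (a permutation of the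
   coordinates, i.e. a product of Fubini swaps of adjacent integrals) does not
   change expectations.  A set function that is monotone for inclusion and
   invariant under relabelling is monotone in |S|, and the majority winner has
   the largest S. *)

Section conull_integral.
Local Open Scope ereal_scope.
Context d (T : measurableType d) (R : realType) (mu : {measure set T -> \bar R}).
Import HBNNSimple.

Lemma ge0_le_integralT_nonmeas (f g : T -> \bar R) :
  (forall x, 0 <= f x) -> (forall x, f x <= g x) ->
  \int[mu]_x f x <= \int[mu]_x g x.
Proof.
move=> f0 fg; have g0 x : 0 <= g x := le_trans (f0 x) (fg x).
rewrite (ge0_integralTE _ f0) (ge0_integralTE _ g0).
apply: ereal_sup_le => _ [h /= hf <-]; exists h => //= x.
exact: le_trans (hf x) (fg x).
Qed.

Variable S : set T.
Hypotheses (mS : measurable S) (muSC : mu (~` S) = 0).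

Lemma ge0_integral_le_restrict (f : T -> \bar R) : (forall x, 0 <= f x) ->
  \int[mu]_x f x <= \int[mu]_x (f \_ S) x.
Proof.
move=> f0; rewrite (ge0_integralTE _ f0); apply: ge_ereal_sup => _ [h /= hf <-].
rewrite -integralT_nnsfun.
have -> : \int[mu]_x (h x)%:E = \int[mu]_(x in S) (h x)%:E.
  have mh : measurable_fun setT (fun x => (h x)%:E : \bar R).
    by apply/measurable_EFinP; exact: measurable_funPT.
  have mSC : measurable (~` S) by exact: measurableC.
  rewrite -[in LHS](setUv S) ge0_integral_setU //; last 3 first.
  - by rewrite setUv.
  - by move=> x _; rewrite lee_fin.
  - by rewrite /disj_set setICr.
  by rewrite [X in _ + X]null_set_integral ?adde0 //; exact: measurable_funTS mh.
rewrite integral_mkcond; apply: ge0_le_integralT_nonmeas => x; rewrite !patchE.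
  by case: ifP => // _; rewrite lee_fin.
by case: ifP => // _; exact: hf.
Qed.

Lemma le_integral_conull (f g : T -> \bar R) : (forall x, S x -> f x <= g x) ->
  \int[mu]_x f x <= \int[mu]_x g x.
Proof.
have restrict_ge0 h : (forall x, 0 <= h x) -> forall x, 0 <= (h \_ S) x.
  by move=> h0 x; rewrite patchE; case: ifP.
move=> fg; rewrite (integralE _ _ f) (integralE _ _ g); apply: leeB.
- apply: le_trans (ge0_integral_le_restrict (funepos_ge0 f)) _.
  apply: ge0_le_integralT_nonmeas => [|x]; first exact/restrict_ge0/funepos_ge0.
  rewrite !patchE; case: ifPn => [xS|_]; last exact: funepos_ge0.
  by apply: (funepos_le (D := S)) xS => y /set_mem; exact: fg.
- apply: le_trans (ge0_integral_le_restrict (funeneg_ge0 g)) _.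
  apply: ge0_le_integralT_nonmeas => [|x]; first exact/restrict_ge0/funeneg_ge0.
  rewrite !patchE; case: ifPn => [xS|_]; last exact: funeneg_ge0.
  by apply: (funeneg_le (D := S)) xS => y /set_mem; exact: fg.
Qed.

End conull_integral.

Section transposition.
Local Open Scope nat_scope.

Definition transp (a b i : nat) : nat :=
  if i == a then b else if i == b then a else i.

Lemma transpL a b : transp a b a = b.
Proof. by rewrite /transp eqxx. Qed.

Lemma transpR a b : transp a b b = a.
Proof. by rewrite /transp eqxx; case: eqP. Qed.

Lemma transp_id a b i : i != a -> i != b -> transp a b i = i.
Proof. by rewrite /transp => /negbTE-> /negbTE->. Qed.

Lemma transpxx a : transp a a =1 id.
Proof. by move=> i; rewrite /transp; case: eqP. Qed.

Lemma transpC a b : transp a b =1 transp b a.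
Proof. by move=> i; rewrite /transp; case: eqP => [->|]; case: eqP => // ->. Qed.

Lemma transp_inj f a b i :
  injective f -> transp (f a) (f b) (f i) = f (transp a b i).
Proof. by move=> fI; rewrite /transp !(inj_eq fI); case: ifP => //; case: ifP. Qed.

Lemma transpS a b i : transp a.+1 b.+1 i.+1 = (transp a b i).+1.
Proof. exact: (transp_inj _ _ _ succn_inj). Qed.

Lemma transp_conj a b : a < b ->
  transp a b.+1 =1 transp b b.+1 \o transp a b \o transp b b.+1.
Proof.
move=> ab i /=.
have [->|ia] := eqVneq i a.
  by rewrite transpL (@transp_id b b.+1 a) ?transpL //; lia.
have [->|ib] := eqVneq i b.
  by rewrite transpL (@transp_id a b b.+1) ?transpR ?(@transp_id a b.+1 b) //; lia.
have [->|ib1] := eqVneq i b.+1.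
  by rewrite !transpR transp_id //; lia.
by rewrite !transp_id.
Qed.

Definition voter_transp (i0 i1 : nat) : nat -> nat :=
  transp (i0 * 2) (i1 * 2) \o transp (i0 * 2).+1 (i1 * 2).+1.

Lemma voter_transpE i0 i1 i r : r < 2 ->
  voter_transp i0 i1 (i * 2 + r) = transp i0 i1 i * 2 + r.
Proof.
have double_inj : injective (fun x => x * 2) by move=> x y /=; lia.
have double1_inj : injective (fun x => (x * 2).+1) by move=> x y /=; lia.
rewrite /voter_transp; case: r => [|[|//]] _ /=; rewrite ?addn0 ?addn1.
  by rewrite (@transp_id _ _ (i * 2)) ?(transp_inj _ _ _ double_inj) //; lia.
by rewrite (transp_inj _ _ _ double1_inj) transp_id //; lia.
Qed.

End transposition.

Section iterated_integral.
Local Open Scope ereal_scope.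
Variables (R : realType) (D : probability R R).

Definition vcons (x : R) (v : nat -> R) : nat -> R :=
  fun i => if i is i'.+1 then v i' else x.

Lemma iter_int_ge0 k f : (forall v, 0 <= f v) -> 0 <= iter_int D k f.
Proof.
by elim: k f => [|k IH] f f0 //=; apply: integral_ge0 => x _; exact: IH.
Qed.

Section conull.
Variable S : set R.
Hypotheses (mS : measurable S) (DSC : D (~` S) = 0).

(* [iter_int D k] evaluates its integrand only at sequences vanishing from
   index [k] on. *)
Lemma le_iter_int_conull k f g :
  (forall v, (forall i, (i < k)%N -> S (v i)) ->
     (forall i, (k <= i)%N -> v i = 0%R) -> f v <= g v) ->
  iter_int D k f <= iter_int D k g.
Proof.
elim: k f g => [|k IH] f g fg /=; first exact: fg.
apply: (le_integral_conull mS DSC) => x Sx; apply: IH => v Sv v0.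
by apply: fg => -[|i] //=; [exact: Sv | exact: v0].
Qed.

Lemma eq_iter_int_conull k f g :
  (forall v, (forall i, (i < k)%N -> S (v i)) ->
     (forall i, (k <= i)%N -> v i = 0%R) -> f v = g v) ->
  iter_int D k f = iter_int D k g.
Proof.
move=> fg; apply/le_anti/andP.
by split; apply: le_iter_int_conull => v vS v0; rewrite fg.
Qed.

End conull.

(* [nat -> R] carries no sigma-algebra here, so a function of the whole sample
   sequence is called measurable when it is measurable along every measurable
   family of coordinates. *)
Definition measurable_seqfun (f : (nat -> R) -> \bar R) : Prop :=
  forall d (Y : measurableType d) (g : nat -> Y -> R),
  (forall i, measurable_fun setT (g i)) ->
  measurable_fun setT (fun y => f (fun i => g i y)).

Lemma measurable_seqfun_vcons x f :
  measurable_seqfun f -> measurable_seqfun (fun v => f (vcons x v)).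
Proof.
move=> mf d Y g mg; apply: (mf _ _ (fun i y => vcons x (g^~ y) i)).
by case=> [|i] /=; [exact: measurable_cst | exact: mg].
Qed.

Lemma measurable_seqfun_comp p f :
  measurable_seqfun f -> measurable_seqfun (fun v => f (v \o p)).
Proof. by move=> mf d Y g mg; exact: (mf _ _ (fun i => g (p i))). Qed.

Lemma measurable_iter_int k d (X : measurableType d)
    (h : X -> (nat -> R) -> \bar R) :
  (forall x v, 0 <= h x v) ->
  (forall d' (Y : measurableType d') (p : Y -> X) (g : nat -> Y -> R),
     measurable_fun setT p -> (forall i, measurable_fun setT (g i)) ->
     measurable_fun setT (fun y => h (p y) (fun i => g i y))) ->
  measurable_fun setT (fun x => iter_int D k (h x)).
Proof.
elim: k d X h => [|k IH] d X h h0 hm /=.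
  by apply: (hm _ X id (fun _ _ => 0%R)) => // i; exact: measurable_cst.
pose h' (z : X * R) v := h z.1 (vcons z.2 v).
have mh' : measurable_fun setT (fun z => iter_int D k (h' z)).
  apply: IH => [z v|d' Y p g mp mg]; first exact: h0.
  apply: (hm _ _ (fst \o p) (fun i y => vcons (p y).2 (g^~ y) i)).
    exact: measurableT_comp measurable_fst mp.
  by case=> [|i] //=; exact: measurableT_comp measurable_snd mp.
exact: (measurable_fun_fubini_tonelli_F (m2 := D) _ mh'
          (fun z => iter_int_ge0 k (fun v => h0 _ _))).
Qed.

Lemma integral_swap (G : R * R -> \bar R) :
  measurable_fun setT G -> (forall z, 0 <= G z) ->
  \int[D]_x \int[D]_y G (y, x) = \int[D]_x \int[D]_y G (x, y).
Proof.
move=> mG G0.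
have mGswap : measurable_fun setT (fun z : R * R => G (z.2, z.1)).
  exact/(measurableT_comp mG)/measurable_fun_pair.
exact: (fubini_tonelli (m1 := D) (m2 := D) _ mGswap (fun z => G0 _)).
Qed.

Definition iter_int_invariant k (p : nat -> nat) : Prop :=
  forall f, measurable_seqfun f -> (forall v, 0 <= f v) ->
  iter_int D k (fun v => f (v \o p)) = iter_int D k f.

Lemma iter_int_invariant_comp k p q :
  iter_int_invariant k p -> iter_int_invariant k q ->
  iter_int_invariant k (p \o q).
Proof.
move=> Hp Hq f mf f0; rewrite -(Hq f mf f0).
exact: (Hp _ (measurable_seqfun_comp q mf) (fun v => f0 _)).
Qed.

Lemma iter_int_invariant_transp01 k : iter_int_invariant k.+2 (transp 0 1).
Proof.
move=> f mf f0 /=.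
pose G (z : R * R) := iter_int D k (fun w => f (vcons z.1 (vcons z.2 w))).
have mG : measurable_fun setT G.
  apply: measurable_iter_int => // d' Y p g mp mg.
  apply: (mf _ _ (fun i y => vcons (p y).1 (vcons (p y).2 (g^~ y)) i)).
  by case=> [|[|i]] //=; exact: measurableT_comp mp.
rewrite -[RHS](integral_swap mG (fun z => iter_int_ge0 _ (fun v => f0 _))).
apply: eq_integral => x _; apply: eq_integral => y _.
by congr iter_int; apply/funext => w; congr f; apply/funext => -[|[|i]].
Qed.

Lemma iter_int_invariant_adjacent k a : (a.+2 <= k)%N ->
  iter_int_invariant k (transp a a.+1).
Proof.
elim: a k => [|a IH] [|k] // ak.
  by case: k ak => // k _; exact: iter_int_invariant_transp01.
move=> f mf f0 /=; apply: eq_integral => x _.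
rewrite -(IH k ak _ (measurable_seqfun_vcons x mf) (fun v => f0 _)).
congr iter_int; apply/funext => v; congr f; apply/funext => -[|i] //=.
by rewrite transpS.
Qed.

Lemma iter_int_invariant_transp k a b : (a < k)%N -> (b < k)%N ->
  iter_int_invariant k (transp a b).
Proof.
wlog ab : a b / (a <= b)%N.
  move=> H ak bk; case: (leqP a b) => [ab|/ltnW ba]; first exact: H.
  by rewrite (funext (transpC a b)); exact: H.
move=> ak; move: ab; rewrite leq_eqVlt => /orP[/eqP <- _ f _ _|].
  by rewrite (funext (transpxx a)).
elim: b => // b IH; rewrite ltnS leq_eqVlt => /orP[/eqP <-|ab] bk.
  exact: iter_int_invariant_adjacent.
rewrite (funext (transp_conj ab)).
apply: iter_int_invariant_comp; first apply: iter_int_invariant_comp.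
- exact: iter_int_invariant_adjacent.
- exact: IH (ltnW bk).
- exact: iter_int_invariant_adjacent.
Qed.

Lemma iter_int_invariant_voter_transp n i0 i1 : (i0 < n)%N -> (i1 < n)%N ->
  iter_int_invariant (n * 2) (voter_transp i0 i1).
Proof.
move=> i0n i1n.
by apply: iter_int_invariant_comp; apply: iter_int_invariant_transp; lia.
Qed.

End iterated_integral.

Lemma le_ratio_max (R : realFieldType) (a a' b b' : R) :
  0 <= a <= a' -> 0 <= b' <= b -> a / Num.max a b <= a' / Num.max a' b'.
Proof.
move=> /andP[a0 aa'] /andP[b'0 b'b]; have a'0 := le_trans a0 aa'.
have [->|a_neq0] := eqVneq a 0; first by rewrite mul0r divr_ge0 // le_max a'0.
have a_gt0 : 0 < a by rewrite lt_def a_neq0.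
have max_gt0 : 0 < Num.max a b by rewrite lt_max a_gt0.
have [b'a'|a'b'] := leP b' a'.
  rewrite divff ?gt_eqF ?(lt_le_trans a_gt0 aa') //.
  by rewrite ler_pdivrMr // mul1r le_max lexx.
have b'_gt0 : 0 < b' := le_lt_trans a'0 a'b'.
have -> : Num.max a b = b by apply/max_r/(le_trans aa')/(le_trans (ltW a'b')).
rewrite ler_pdivrMr ?(lt_le_trans b'_gt0) // mulrAC ler_pdivlMr //.
exact: ler_pM.
Qed.

Section two_sample_statistics.
Variables (R : realType) (n : nat).
Implicit Types (S : {set 'I_n}) (s : nat -> R).

Definition sample_max s (i : nat) : R := Num.max (s (i * 2)%N) (s (i * 2 + 1)%N).
Definition sample_min s (i : nat) : R := Num.min (s (i * 2)%N) (s (i * 2 + 1)%N).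

Definition welfare S s : R :=
  \sum_(i < n) (if i \in S then sample_max s i else sample_min s i).

Definition distortion S s : R :=
  welfare S s / Num.max (welfare S s) (welfare (~: S) s).

Lemma sample_min_le_max s i : sample_min s i <= sample_max s i.
Proof. by rewrite ge_min !le_max lexx. Qed.

Lemma sample_min_ge0 s i : (forall j, 0 <= s j) -> 0 <= sample_min s i.
Proof. by move=> s0; rewrite le_min !s0. Qed.

Lemma welfare_ge0 S s : (forall i, 0 <= s i) -> 0 <= welfare S s.
Proof.
move=> s0; apply: sumr_ge0 => i _; have := sample_min_ge0 i s0.
by case: ifP => // _ /le_trans; apply; exact: sample_min_le_max.
Qed.

Lemma le_welfare S S' s : S \subset S' -> welfare S s <= welfare S' s.
Proof.
move=> /fintype.subsetP SS'; apply: ler_sum => i _.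
case: ifP => [/SS' -> //|_]; case: ifP => // _; exact: sample_min_le_max.
Qed.

Lemma distortion_ge0 S s : (forall i, 0 <= s i) -> 0 <= distortion S s.
Proof. by move=> s0; rewrite divr_ge0 ?le_max ?welfare_ge0. Qed.

Lemma le_distortion S S' s : S \subset S' -> (forall i, 0 <= s i) ->
  distortion S s <= distortion S' s.
Proof.
move=> SS' s0; apply: le_ratio_max; rewrite ?welfare_ge0 ?le_welfare //.
by rewrite finset.setCS.
Qed.

Lemma tperm_transp (i0 i1 i : 'I_n) : val (tperm i0 i1 i) = transp i0 i1 i.
Proof.
case: tpermP => [->|->|ni0 ni1]; rewrite ?transpL ?transpR //.
by rewrite transp_id //; apply/eqP => /val_inj.
Qed.

Lemma voter_transp_sample s (i0 i1 i : 'I_n) r : (r < 2)%N ->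
  (s \o voter_transp i0 i1) (i * 2 + r)%N = s (tperm i0 i1 i * 2 + r)%N.
Proof. by move=> r2; rewrite /= voter_transpE // tperm_transp. Qed.

Lemma sample_max_voter_transp s (i0 i1 i : 'I_n) :
  sample_max (s \o voter_transp i0 i1) i = sample_max s (tperm i0 i1 i).
Proof.
rewrite /sample_max; have := voter_transp_sample s i0 i1 i (_ : 0 < 2)%N.
by rewrite !addn0 => -> //; rewrite voter_transp_sample.
Qed.

Lemma sample_min_voter_transp s (i0 i1 i : 'I_n) :
  sample_min (s \o voter_transp i0 i1) i = sample_min s (tperm i0 i1 i).
Proof.
rewrite /sample_min; have := voter_transp_sample s i0 i1 i (_ : 0 < 2)%N.
by rewrite !addn0 => -> //; rewrite voter_transp_sample.
Qed.

Lemma welfare_voter_transp S s (i0 i1 : 'I_n) :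
  welfare S (s \o voter_transp i0 i1) = welfare (tperm i0 i1 @^-1: S) s.
Proof.
rewrite /welfare (reindex_inj (@perm_inj _ (tperm i0 i1))) /=.
apply: eq_bigr => i _.
by rewrite inE sample_max_voter_transp sample_min_voter_transp tpermK.
Qed.

Lemma distortion_voter_transp S s (i0 i1 : 'I_n) :
  distortion S (s \o voter_transp i0 i1) = distortion (tperm i0 i1 @^-1: S) s.
Proof. by rewrite /distortion !welfare_voter_transp preimsetC. Qed.

End two_sample_statistics.

Section measurability.
Variables (R : realType) (n : nat).

Lemma measurable_inv : measurable_fun setT (@GRing.inv R).
Proof.
(* [powR] inverts only nonnegative reals; at [0] both sides are [0]. *)
have -> : @GRing.inv R = fun x => x * (x ^+ 2) `^ (-1).
  apply/funext => x; rewrite powR_inv1 ?sqr_ge0 //.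
  have [->|x0] := eqVneq x 0; first by rewrite mul0r invr0.
  by rewrite expr2 invfM mulrA divff ?mul1r.
apply: measurable_funM => //; apply: measurableT_comp (@measurable_powR R _) _.
exact: measurable_funX.
Qed.

Variables (d : measure_display) (Y : measurableType d) (g : nat -> Y -> R).
Hypothesis mg : forall i, measurable_fun setT (g i).

Lemma measurable_welfare (S : {set 'I_n}) :
  measurable_fun setT (fun y => welfare S (fun i => g i y)).
Proof.
apply: measurable_sum => i.
by case: (i \in S); [apply: measurable_maxr|apply: measurable_minr].
Qed.

Lemma measurable_distortion (S : {set 'I_n}) :
  measurable_fun setT (fun y => distortion S (fun i => g i y)).
Proof.
apply: measurable_funM; first exact: measurable_welfare.
apply: measurableT_comp measurable_inv _.
by apply: measurable_maxr; exact: measurable_welfare.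
Qed.

End measurability.

Lemma measurable_seqfun_welfare (R : realType) n (S : {set 'I_n}) :
  measurable_seqfun (fun v : nat -> R => (welfare S v)%:E).
Proof. by move=> d Y g mg; apply/measurable_EFinP; exact: measurable_welfare. Qed.

Lemma measurable_seqfun_distortion (R : realType) n (S : {set 'I_n}) :
  measurable_seqfun (fun v : nat -> R => (distortion S v)%:E).
Proof.
by move=> d Y g mg; apply/measurable_EFinP; exact: measurable_distortion.
Qed.

Section tperm_invariant.
Local Open Scope nat_scope.

Lemma le_card_tperm_invariant (T : finType) disp (V : porderType disp)
    (E : {set T} -> V) :
  {homo E : S S' / S \subset S' >-> (S <= S')%O} ->
  (forall (S : {set T}) (a b : T), E (tperm a b @^-1: S) = E S) ->
  forall S S' : {set T}, #|S| <= #|S'| -> (E S <= E S')%O.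
Proof.
move=> E_homo E_tperm S S'; move: {2}#|S :\: S'| (leqnn #|S :\: S'|) => k.
elim: k S => [|k IH] S.
  by rewrite leqn0 cards_eq0 finset.setD_eq0 => /E_homo.
case: (set_0Vmem (S :\: S')) => [/eqP|[b]].
  by rewrite finset.setD_eq0 => /E_homo.
rewrite inE => /andP[bS' bS] SS'k cardSS'.
have [a] : exists a, a \in S' :\: S.
  apply/card_gt0P; move: (cardsID S S') (cardsID S' S).
  have : 0 < #|S :\: S'| by apply/card_gt0P; exists b; rewrite inE bS bS'.
  rewrite finset.setIC; lia.
rewrite inE => /andP[aS aS'].
rewrite -(E_tperm S a b); apply: IH; last first.
  by rewrite card_preimset //; exact: perm_inj.
have : (tperm a b @^-1: S) :\: S' \subset (S :\: S') :\ b.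
  apply/fintype.subsetP => x; rewrite !inE; case: tpermP => [->|->|xa xb].
  - by rewrite aS'.
  - by rewrite (negbTE aS) andbF.
  - by move=> ->; rewrite andbT; apply/eqP.
move=> /subset_leq_card; move: (cardsD1 b (S :\: S')); rewrite inE bS bS' /=.
lia.
Qed.

End tperm_invariant.

Section expected_statistic.
Variables (R : realType) (D : probability R R) (n : nat).
Hypothesis D01 : D `[0%R, 1%R] = 1%E.
Implicit Types (S : {set 'I_n}) (s : nat -> R).

(* The samples lie in [0,1] only almost surely; clamping them makes the
   integrands nonnegative everywhere, as Fubini-Tonelli requires, without
   changing the integrals. *)
Definition clamp01 (x : R) : R := Num.max 0 (Num.min x 1).

Lemma clamp01_id x : 0 <= x <= 1 -> clamp01 x = x.
Proof. by case/andP => x0 x1; rewrite /clamp01 (min_l x1) (max_r x0). Qed.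

Lemma clamp01_ge0 x : 0 <= clamp01 x.
Proof. by rewrite le_max lexx. Qed.

Lemma measurable_seqfun_clamp01 f :
  measurable_seqfun f -> measurable_seqfun (fun v => f (clamp01 \o v)).
Proof.
move=> mf d Y g mg; apply: (mf _ _ (fun i y => clamp01 (g i y))) => i.
apply: measurable_maxr => //; exact: measurable_minr.
Qed.

Lemma le_iter_int_card (Phi : {set 'I_n} -> (nat -> R) -> R) :
  (forall S S' s, S \subset S' -> (forall i, 0 <= s i) -> Phi S s <= Phi S' s) ->
  (forall S s, (forall i, 0 <= s i) -> 0 <= Phi S s) ->
  (forall S s (i0 i1 : 'I_n),
     Phi S (s \o voter_transp i0 i1) = Phi (tperm i0 i1 @^-1: S) s) ->
  (forall S, measurable_seqfun (fun v => (Phi S v)%:E)) ->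
  forall S S', (#|S| <= #|S'|)%N ->
  (iter_int D (n * 2) (fun s => (Phi S s)%:E) <=
   iter_int D (n * 2) (fun s => (Phi S' s)%:E))%E.
Proof.
move=> Phi_homo Phi_ge0 Phi_transp mPhi.
have m01 : measurable (`[0%R, 1%R] : set R) by exact: measurable_itv.
have DC01 : D (~` `[0%R, 1%R]) = 0%E by rewrite probability_setC // D01 subee.
have in01 (v : nat -> R) : (forall i, (i < n * 2)%N -> `[0%R, 1%R] (v i)) ->
    (forall i, (n * 2 <= i)%N -> v i = 0) -> forall i, 0 <= v i <= 1.
  move=> v01 v0 i; case: (ltnP i (n * 2)) => [/v01|/v0 ->].
    by rewrite /= in_itv.
  by rewrite lexx ler01.
have Phi_clamp S : iter_int D (n * 2) (fun s => (Phi S s)%:E) =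
    iter_int D (n * 2) (fun s => (Phi S (clamp01 \o s))%:E).
  apply: (eq_iter_int_conull m01 DC01) => v v01 v0.
  by congr (Phi S _)%:E; apply/funext => i; rewrite /= clamp01_id // in01.
apply: le_card_tperm_invariant => [S S' SS'|S a b].
  apply: (le_iter_int_conull m01 DC01) => v v01 v0.
  by rewrite lee_fin Phi_homo // => i; case/andP: (in01 v v01 v0 i).
rewrite !Phi_clamp.
under eq_fun do rewrite -Phi_transp.
apply: (iter_int_invariant_voter_transp D (ltn_ord a) (ltn_ord b)).
  exact: measurable_seqfun_clamp01 (mPhi S).
by move=> v; rewrite lee_fin Phi_ge0 // => i; exact: clamp01_ge0.
Qed.

End expected_statistic.

Section two_alternatives.
Variables (R : realType) (n : nat).
Implicit Types (sigma : profile n 2) (s : nat -> R).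

Definition first_voters sigma (k : 'I_2) : {set 'I_n} :=
  [set i | sigma i ord0 == k].

Lemma first_votersC sigma (j k : 'I_2) :
  k != j -> first_voters sigma k = ~: first_voters sigma j.
Proof.
move=> kj; apply/setP => i; rewrite !inE.
by case: (sigma i ord0) k j kj => -[|[|//]] ? [[|[|//]] ?] [[|[|//]] ?].
Qed.

Lemma sort_ge_pair (x y : R) :
  sort (fun a b => b <= a) [:: x; y] = [:: Num.max x y; Num.min x y].
Proof. by rewrite /sort /=; case: leP. Qed.

Lemma utility_two sigma s i k : utility sigma s i k =
  if i \in first_voters sigma k then sample_max s i else sample_min s i.
Proof.
rewrite /utility /voter_samples /= addn0 sort_ge_pair inE.
have [<-|top_neq_k] := eqVneq (sigma i ord0) k; first by rewrite permK.
have : (sigma i)^-1%g k != ord0.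
  by apply: contraNneq top_neq_k => <-; rewrite permKV.
by case: ((sigma i)^-1%g k) => -[|[|//]].
Qed.

Lemma sw_two sigma s k : sw sigma s k = welfare (first_voters sigma k) s.
Proof. by apply: eq_bigr => i _; rewrite utility_two. Qed.

Lemma dist_two sigma s k : dist sigma s k = distortion (first_voters sigma k) s.
Proof.
rewrite /dist /distortion /max_sw !big_ord_recl big_ord0 !sw_two.
have [->|->] : k = ord0 \/ k = lift ord0 ord0.
  by case: k => -[|[|//]] ?; [left|right]; apply/val_inj.
- rewrite [first_voters _ (lift _ _)](first_votersC _ (j := ord0)) //.
  by rewrite maxCA maxxx maxC.
- rewrite [first_voters _ ord0](first_votersC _ (j := lift ord0 ord0)) //.
  by rewrite maxxx maxC.
Qed.

Lemma exp_sw_two D sigma k : exp_sw D sigma k =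
  iter_int D (n * 2) (fun s => (welfare (first_voters sigma k) s)%:E).
Proof. by congr iter_int; apply/funext => s; rewrite sw_two. Qed.

Lemma exp_dist_two D sigma k : exp_dist D sigma k =
  iter_int D (n * 2) (fun s => (distortion (first_voters sigma k) s)%:E).
Proof. by congr iter_int; apply/funext => s; rewrite dist_two. Qed.

End two_alternatives.

Theorem theorem1 (R : realType) (n : nat) (hn : (1 <= n)%N)
  (D : probability R R) (hD : D `[0%R, 1%R] = 1%E)
  (f : voting_rule n 2) :
  majority_rule f ->
  exp_dist_maximizing D f /\ exp_welfare_maximizing D f.
Proof.
move=> f_majority; split=> sigma j.
- rewrite !exp_dist_two; apply: (le_iter_int_card hD) (f_majority sigma j).
  + exact: le_distortion.
  + exact: distortion_ge0.
  + exact: distortion_voter_transp.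
  + exact: measurable_seqfun_distortion.
- rewrite !exp_sw_two; apply: (le_iter_int_card hD) (f_majority sigma j).
  + by move=> S S' s SS' _; exact: le_welfare.
  + exact: welfare_ge0.
  + exact: welfare_voter_transp.
  + exact: measurable_seqfun_welfare.
Qed.
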